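(* The Uniform Price Auction is incentive compatible (with public budgets), never charges an agent more than its budget, and for every input its allocation $x$ satisfies $\bar W(x)\ge\frac12\bar W^*$.
   Context: Uniform Price Auction: one unit of a divisible good, $n$ agents with values per unit $v_i>0$ and publicly known budgets $B_i>0$. Relabel agents so that $v_1\ge\dots\ge v_n$ and set $v_{n+1}=0$. Let $k\in\{0,\dots,n\}$ be the largest integer with $\sum_{j=1}^kB_j\le v_k$ (the empty sum is $0$, and $k=0$ is always admissible). Case I: if $\sum_{j=1}^kB_j>v_{k+1}$, allocate $x_i=B_i/\sum_{j=1}^kB_j$ for $i\le k$ and $0$ to everyone else. Case II: if $\sum_{j=1}^kB_j\le v_{k+1}$, allocate $x_i=B_i/v_{k+1}$ for $i\le k$, $x_{k+1}=1-\sum_{j=1}^kx_j$, and $0$ to everyone else. Payments are given by Myerson's formula $\pi_i(v)=v_ix_i(v)-\int_0^{v_i}x_i(u,v_{-i})\,du$. Agent utility is $v_ix_i-\pi_i$ if $\pi_i\le B_i$ and $-\infty$ otherwise; incentive compatibility means truthfully reporting the value maximizes utility for all reports of others. Liquid welfare: $\bar W(x)=\sum_i\min\{v_ix_i,B_i\}$; $\bar W^*=\max\{\bar W(x):x\in\mathbb R^n_{\ge0},\sum_ix_i=1\}$. *)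

From Stdlib Require Import Reals ClassicalEpsilon.
Open Scope R_scope.

(* Agents are indexed by 0 .. n-1; profiles are functions nat -> R
   (entries at indices >= n are ignored). *)

Fixpoint sumR (m : nat) (f : nat -> R) : R :=
  match m with
  | O => 0
  | S m' => sumR m' f + f m'
  end.

Fixpoint countN (m : nat) (p : nat -> bool) : nat :=
  match m with
  | O => O
  | S m' => (countN m' p + (if p m' then 1 else 0))%nat
  end.

(* Agent j is placed before agent i in the sorted order v_1 >= ... >= v_n:
   higher value first, ties broken by smaller index. *)
Definition before (v : nat -> R) (j i : nat) : bool :=
  if Rlt_dec (v i) (v j) then true
  else if Req_EM_T (v j) (v i) then Nat.ltb j i else false.

(* 0-based position of agent i in the sorted order *)
Definition rank (n : nat) (v : nat -> R) (i : nat) : nat :=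
  countN n (fun j => before v j i).

(* sum_{j=1}^m B_j  (sorted, 1-based) *)
Definition prefB (n : nat) (B v : nat -> R) (m : nat) : R :=
  sumR n (fun j => if Nat.ltb (rank n v j) m then B j else 0).

(* v_r (sorted, 1-based); v_{n+1} = 0 automatically *)
Definition vsorted (n : nat) (v : nat -> R) (r : nat) : R :=
  sumR n (fun j => if Nat.eqb (S (rank n v j)) r then v j else 0).

(* largest k in {0..n} with k = 0 or sum_{j<=k} B_j <= v_k *)
Fixpoint kaux (n : nat) (B v : nat -> R) (m : nat) : nat :=
  match m with
  | O => O
  | S m' => if Rle_dec (prefB n B v m) (vsorted n v m) then m else kaux n B v m'
  end.

Definition kstar (n : nat) (B v : nat -> R) : nat := kaux n B v n.

Definition alloc (n : nat) (B v : nat -> R) (i : nat) : R :=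
  let k := kstar n B v in
  let T := prefB n B v k in
  let w := vsorted n v (S k) in
  if Rlt_dec w T then
    (if Nat.ltb (rank n v i) k then B i / T else 0)
  else
    (if Nat.ltb (rank n v i) k then B i / w
     else if Nat.eqb (rank n v i) k then
       1 - sumR n (fun j => if Nat.ltb (rank n v j) k then B j / w else 0)
     else 0).

(* Riemann integral of f over [a,b] (arbitrary value if f is not integrable) *)
Definition integral (f : R -> R) (a b : R) : R :=
  epsilon (inhabits 0) (fun I => exists pr : Riemann_integrable f a b, RiemannInt pr = I).

Definition upd (v : nat -> R) (i : nat) (u : R) : nat -> R :=
  fun j => if Nat.eqb j i then u else v j.

Definition pay (n : nat) (B v : nat -> R) (i : nat) : R :=
  v i * alloc n B v i - integral (fun u => alloc n B (upd v i u) i) 0 (v i).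

(* utility in R U {-oo}; None stands for -oo *)
Definition utility (n : nat) (B b : nat -> R) (i : nat) (vi : R) : option R :=
  if Rle_dec (pay n B b i) (B i) then Some (vi * alloc n B b i - pay n B b i) else None.

Definition ole (a b : option R) : Prop :=
  match a, b with
  | None, _ => True
  | Some _, None => False
  | Some x, Some y => x <= y
  end.

Definition LW (n : nat) (v B x : nat -> R) : R :=
  sumR n (fun i => Rmin (v i * x i) (B i)).

Definition feasible (n : nat) (x : nat -> R) : Prop :=
  (forall i, (i < n)%nat -> 0 <= x i) /\ sumR n x = 1.

Definition is_opt_LW (n : nat) (v B : nat -> R) (W : R) : Prop :=
  (exists x, feasible n x /\ LW n v B x = W) /\
  (forall x, feasible n x -> LW n v B x <= W).

(* Structure of the proof.
   - Myerson: if the allocation x(t) of an agent is nondecreasing in its own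
     bid t, the payment t x(t) - int_0^t x makes truthful reporting optimal
     (myerson_truthful); nondecreasing functions are Riemann integrable
     (mono_integrable), so the payment is well defined.
   - Outcome: with k winners, T = B_1 + ... + B_k and W = v_(k+1), every winner
     buys B_i / p at the uniform price p = max(T, W), the marginal agent k + 1
     gets 1 - T / W in Case II, and the others get nothing.
   - Monotonicity: a winner that raises its bid leaves k, T and W unchanged
     (winner_alloc_stable); for the marginal agent we compare with the demand
     at the new price (price_le_budget_above), which gives alloc_mono.
   - Budgets: a winner's allocation is flat above p, so it pays at most
     p * (B_i / p) = B_i; a non-winner pays at most what it spends
     (payment_le_budget).
   - Welfare: the liquid welfare of the auction equals p (LW_alloc_eq_price),
     every feasible allocation has liquid welfare at most T + W <= 2 p
     (LW_le_two_price), and the optimum is attained by the greedy allocation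
     saturating agents by decreasing value (exists_opt_LW). *)

From Stdlib Require Import Reals RList Lra Lia ClassicalEpsilon FinFun Bool
  FunctionalExtensionality.
Open Scope R_scope.

Lemma sumR_ext n f g : (forall j, (j < n)%nat -> f j = g j) -> sumR n f = sumR n g.
Proof.
  induction n as [|n IH]; intros H; simpl; auto.
  rewrite IH by (intros; apply H; lia). rewrite H by lia. reflexivity.
Qed.

Lemma sumR_shift n f : sumR (S n) f = f 0%nat + sumR n (fun i => f (S i)).
Proof. induction n as [|n IH]; simpl in *; [lra|]. rewrite IH. lra. Qed.

Lemma sumR_telescope n g : sumR n (fun i => g (S i) - g i) = g n - g 0%nat.
Proof. induction n as [|n IH]; simpl; [lra|]. rewrite IH. lra. Qed.

Lemma sumR_scal n c f : sumR n (fun i => c * f i) = c * sumR n f.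
Proof. induction n as [|n IH]; simpl; [lra|]. rewrite IH. lra. Qed.

Lemma sumR_plus n f g : sumR n (fun j => f j + g j) = sumR n f + sumR n g.
Proof. induction n as [|n IH]; simpl; [lra|]. rewrite IH. lra. Qed.

Lemma sumR_le n f g : (forall j, (j < n)%nat -> f j <= g j) -> sumR n f <= sumR n g.
Proof.
  induction n as [|n IH]; intros H; simpl; [lra|].
  pose proof (IH (fun j Hj => H j ltac:(lia))). pose proof (H n ltac:(lia)). lra.
Qed.

Lemma sumR_zero n f : (forall j, (j < n)%nat -> f j = 0) -> sumR n f = 0.
Proof.
  induction n as [|n IH]; intros H; simpl; auto.
  rewrite (IH (fun j Hj => H j ltac:(lia))), H by lia. lra.
Qed.

Lemma sumR_nonneg n f : (forall j, (j < n)%nat -> 0 <= f j) -> 0 <= sumR n f.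
Proof. intros H. rewrite <- (sumR_zero n (fun _ => 0)) by auto. apply sumR_le. auto. Qed.

Lemma sumR_single n f a : (a < n)%nat -> (forall j, (j < n)%nat -> j <> a -> f j = 0) ->
  sumR n f = f a.
Proof.
  induction n as [|n IH]; intros Ha H; [lia|]. simpl.
  destruct (Nat.eq_dec a n) as [->|Hne].
  - rewrite sumR_zero by (intros j Hj; apply H; lia). lra.
  - rewrite IH by (lia || (intros; apply H; lia)). rewrite (H n) by lia. lra.
Qed.

Lemma sumR_indicator n a F : (a < n)%nat -> sumR n (fun j => if Nat.eqb j a then F j else 0) = F a.
Proof.
  intros Ha. rewrite (sumR_single n _ a Ha), Nat.eqb_refl; auto.
  intros j _ Hj. apply Nat.eqb_neq in Hj. rewrite Hj. reflexivity.
Qed.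

Lemma sumR_swap n m F :
  sumR n (fun i => sumR m (fun j => F i j)) = sumR m (fun j => sumR n (fun i => F i j)).
Proof.
  induction n as [|n IH]; simpl; [symmetry; apply sumR_zero; auto|].
  rewrite IH, <- sumR_plus. reflexivity.
Qed.

Lemma sumR_reindex n h G : bFun n h -> bInjective n h -> sumR n (fun j => G (h j)) = sumR n G.
Proof.
  intros Hf Hi.
  assert (Hs : bSurjective n h) by (apply (proj1 (bInjective_bSurjective Hf)); auto).
  transitivity (sumR n (fun j => sumR n (fun r => if Nat.eqb r (h j) then G r else 0))).
  - apply sumR_ext. intros j Hj. symmetry. apply (sumR_indicator n (h j) G). auto.
  - rewrite sumR_swap. apply sumR_ext. intros r Hr.
    destruct (Hs r Hr) as [j [Hj <-]].
    rewrite (sumR_single n _ j Hj), Nat.eqb_refl; auto.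
    intros l Hl Hne. destruct (Nat.eqb_spec (h j) (h l)); auto.
    exfalso. apply Hne, Hi; auto.
Qed.

Lemma countN_mono n p q : (forall j, (j < n)%nat -> p j = true -> q j = true) ->
  (countN n p <= countN n q)%nat.
Proof.
  induction n as [|n IH]; intros H; simpl; auto.
  pose proof (IH (fun j Hj => H j ltac:(lia))).
  specialize (H n ltac:(lia)). destruct (p n), (q n); try lia; discriminate (H eq_refl).
Qed.

Lemma countN_strict n p q : (forall j, (j < n)%nat -> p j = true -> q j = true) ->
  (exists j, (j < n)%nat /\ p j = false /\ q j = true) -> (countN n p < countN n q)%nat.
Proof.
  induction n as [|n IH]; intros H [j [Hj [Hp Hq]]]; [lia|]. simpl.
  pose proof (countN_mono n p q (fun j Hj => H j ltac:(lia))).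
  destruct (Nat.eq_dec j n) as [->|Hne].
  - rewrite Hp, Hq. lia.
  - assert (countN n p < countN n q)%nat.
    { apply IH; [intros x Hx; apply H; lia|]. exists j. repeat split; auto; lia. }
    specialize (H n ltac:(lia)). destruct (p n), (q n); try lia; discriminate (H eq_refl).
Qed.

Lemma countN_INR n p : INR (countN n p) = sumR n (fun j => if p j then 1 else 0).
Proof. induction n as [|n IH]; simpl; auto. rewrite plus_INR, IH. destruct (p n); simpl; lra. Qed.

Lemma countN_ext n p q : (forall j, (j < n)%nat -> p j = q j) -> countN n p = countN n q.
Proof.
  induction n as [|n IH]; intros H; simpl; auto.
  rewrite IH by (intros; apply H; lia). rewrite H by lia. reflexivity.
Qed.

Lemma countN_remove n p j : (j < n)%nat -> p j = true ->
  (countN n (fun l => p l && negb (Nat.eqb l j)) + 1 = countN n p)%nat.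
Proof.
  induction n as [|n IH]; intros Hj Hp; [lia|]. simpl.
  destruct (Nat.eq_dec j n) as [->|Hne].
  - rewrite Hp, Nat.eqb_refl. simpl.
    rewrite (countN_ext n _ p); [lia|].
    intros l Hl. destruct (Nat.eqb_spec l n); [lia|]. apply andb_true_r.
  - rewrite <- (IH ltac:(lia) Hp). destruct (Nat.eqb_spec n j); [lia|]. simpl.
    destruct (p n); simpl; lia.
Qed.

Lemma countN_below n m : countN n (fun r => Nat.ltb r m) = Nat.min n m.
Proof.
  induction n as [|n IH]; [reflexivity|]. cbn [countN]. rewrite IH.
  destruct (Nat.ltb_spec n m); lia.
Qed.

(** Monotone functions are Riemann integrable *)

Fixpoint points (h : nat -> R) (N : nat) : list R :=
  match N with O => h 0%nat :: nil | S N' => h 0%nat :: points (fun i => h (S i)) N' end.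
Fixpoint values (F : nat -> R) (N : nat) : list R :=
  match N with O => nil | S N' => F 0%nat :: values (fun i => F (S i)) N' end.

Lemma points_length N h : length (points h N) = S N.
Proof. revert h; induction N; intros; simpl; auto. Qed.

Lemma values_length N F : length (values F N) = N.
Proof. revert F; induction N; intros; simpl; auto. Qed.

Lemma points_nth N h i : (i <= N)%nat -> pos_Rl (points h N) i = h i.
Proof.
  revert h i; induction N as [|N IH]; intros h i Hi.
  - replace i with 0%nat by lia. reflexivity.
  - destruct i; simpl; auto. rewrite IH by lia. reflexivity.
Qed.

Lemma values_nth N F i : (i < N)%nat -> pos_Rl (values F N) i = F i.
Proof.
  revert F i; induction N as [|N IH]; intros F i Hi; [lia|].
  destruct i; simpl; auto. rewrite IH by lia. reflexivity.
Qed.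

Lemma Int_SF_points N h F :
  Int_SF (values F N) (points h N) = sumR N (fun i => F i * (h (S i) - h i)).
Proof.
  revert h F; induction N as [|N IH]; intros h F; [reflexivity|].
  rewrite sumR_shift, <- (IH (fun i => h (S i)) (fun i => F (S i))). destruct N; reflexivity.
Qed.

Lemma points_subdivision a b N h :
  h 0%nat = a -> h N = b -> (forall i, (i < N)%nat -> h i <= h (S i)) ->
  ordered_Rlist (points h N) /\ pos_Rl (points h N) 0 = a /\
  pos_Rl (points h N) (pred (length (points h N))) = b.
Proof.
  intros H0 HN Hord. rewrite points_length. repeat split.
  - intros i Hi. rewrite points_length in Hi. simpl in Hi.
    rewrite !points_nth by lia. apply Hord. lia.
  - rewrite points_nth by lia. auto.
  - simpl. rewrite points_nth by lia. auto.
Qed.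

(* A step function that is constant on the cells of points h N, as produced
   by StepFun_P38, takes the value g (h i) on the cell [h i, h (S i)). *)
Lemma step_value_on_cell a b N h g (sg : StepFun a b) :
  (forall i, (i < pred (length (points h N)))%nat ->
     constant_D_eq sg (co_interval (pos_Rl (points h N) i) (pos_Rl (points h N) (S i)))
       (g (pos_Rl (points h N) i))) ->
  forall i t, (i < N)%nat -> h i <= t < h (S i) -> sg t = g (h i).
Proof.
  intros Hsg i t Hi Ht. rewrite <- (points_nth N h i) by lia. apply Hsg.
  - rewrite points_length. simpl. lia.
  - unfold co_interval. rewrite !points_nth by lia. auto.
Qed.

Lemma RiemannInt_SF_cells a b N h F (psi : StepFun a b) :
  a <= b -> h 0%nat = a -> h N = b -> (forall i, (i < N)%nat -> h i <= h (S i)) ->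
  (forall i t, (i < N)%nat -> h i < t < h (S i) -> psi t = F i) ->
  RiemannInt_SF psi = sumR N (fun i => F i * (h (S i) - h i)).
Proof.
  intros Hab H0 HN Hord Hpsi.
  destruct (points_subdivision a b N h H0 HN Hord) as (Hordered & Hfirst & Hlast).
  assert (Had : adapted_couple psi a b (points h N) (values F N)).
  { unfold adapted_couple. rewrite Rmin_left, Rmax_right by lra.
    repeat split; auto.
    - rewrite points_length, values_length. reflexivity.
    - intros i Hi t Ht. rewrite points_length in Hi. simpl in Hi. rewrite values_nth by lia.
      unfold open_interval in Ht. rewrite !points_nth in Ht by lia. apply Hpsi; auto. }
  unfold RiemannInt_SF. destruct (Rle_dec a b) as [_|]; [|lra].
  rewrite (StepFun_P17 (StepFun_P1 psi) Had). apply Int_SF_points.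
Qed.

Lemma find_cell N (h : nat -> R) t :
  h 0%nat <= t -> t < h N -> exists i, (i < N)%nat /\ h i <= t < h (S i).
Proof.
  induction N as [|N IH]; intros H0 H1; [lra|].
  destruct (Rlt_dec t (h N)) as [Hl|Hl].
  - destruct (IH H0 Hl) as [i [Hi1 Hi2]]. exists i. split; [lia|auto].
  - exists N. split; [lia|lra].
Qed.

Section MonotoneIntegrable.
Variables (f : R -> R) (a b : R).
Hypothesis a_lt_b : a < b.
Hypothesis f_mono : forall x y, a <= x -> x <= y -> y <= b -> f x <= f y.

(* On the uniform grid with N cells of width d, f is squeezed between the step
   function of its values at left endpoints and that plus the oscillation of f
   over each cell; the oscillations telescope to d * (f b - f a). *)
Lemma uniform_grid_approx N : (0 < N)%nat ->
  { phi : StepFun a b & { psi : StepFun a b |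
      (forall t, Rmin a b <= t <= Rmax a b -> Rabs (f t - phi t) <= psi t) /\
      RiemannInt_SF psi = (b - a) / INR N * (f b - f a) } }.
Proof.
  intros HN. rewrite Rmin_left, Rmax_right by lra.
  assert (HNpos : 0 < INR N) by (apply lt_0_INR; lia).
  set (d := (b - a) / INR N).
  assert (Hd : 0 < d) by (unfold d; apply Rdiv_lt_0_compat; lra).
  set (h := fun i : nat => a + INR i * d).
  assert (h0 : h 0%nat = a) by (unfold h; simpl; lra).
  assert (hN : h N = b) by (unfold h, d; field; lra).
  assert (hS : forall i, h (S i) = h i + d) by (intros; unfold h; rewrite S_INR; lra).
  assert (h_in : forall i, (i <= N)%nat -> a <= h i <= b).
  { intros i Hi. apply le_INR in Hi. pose proof (pos_INR i). rewrite <- hN. unfold h. nra. }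
  destruct (points_subdivision a b N h h0 hN ltac:(intros; rewrite hS; lra))
    as (Hord & Hfirst & Hlast).
  set (osc := fun t => f (Rmin (t + d) b) - f t).
  assert (osc_h : forall i, (i < N)%nat -> osc (h i) = f (h (S i)) - f (h i)).
  { intros i Hi. unfold osc. rewrite <- hS, Rmin_left; auto. apply h_in. lia. }
  destruct (StepFun_P38 f Hord Hfirst Hlast) as [phi [Hphib Hphi]].
  destruct (StepFun_P38 osc Hord Hfirst Hlast) as [psi [Hpsib Hpsi]].
  pose proof (step_value_on_cell a b N h f phi Hphi) as Hphi_cell.
  pose proof (step_value_on_cell a b N h osc psi Hpsi) as Hpsi_cell.
  exists phi, psi. split.
  - intros t Ht. destruct (Req_dec t b) as [->|Htb].
    + rewrite Hphib, Hpsib. unfold osc. rewrite Rmin_right by lra.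
      rewrite Rminus_diag, Rabs_R0. lra.
    + destruct (find_cell N h t) as [i [Hi Hit]]; try lra.
      rewrite (Hphi_cell i t Hi Hit), (Hpsi_cell i t Hi Hit), osc_h by auto.
      assert (f (h i) <= f t) by (apply f_mono; try lra; apply h_in; lia).
      assert (f t <= f (h (S i))) by (apply f_mono; try lra; apply h_in; lia).
      rewrite Rabs_right; lra.
  - rewrite (RiemannInt_SF_cells a b N h (fun i => osc (h i)) psi) by
      (lra || auto || (intros; rewrite hS; lra) ||
       (intros i t Hi Ht; apply Hpsi_cell; auto; lra)).
    rewrite (sumR_ext N _ (fun i => d * (f (h (S i)) - f (h i))))
      by (intros i Hi; rewrite osc_h, hS by auto; ring).
    rewrite sumR_scal, (sumR_telescope N (fun i => f (h i))), hN, h0. reflexivity.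
Qed.

Lemma mono_integrable : Riemann_integrable f a b.
Proof.
  intro eps. pose proof (cond_pos eps) as Heps.
  assert (Hfab : f a <= f b) by (apply f_mono; lra).
  destruct (constructive_indefinite_description _
              (INR_unbounded ((b - a) * (f b - f a) / eps))) as [N HN].
  destruct (uniform_grid_approx (S N) ltac:(lia)) as [phi [psi [Happrox Hint]]].
  exists phi, psi. split; auto.
  rewrite Hint, S_INR. pose proof (pos_INR N).
  rewrite Rabs_right by (apply Rle_ge, Rmult_le_pos; [apply Rlt_le, Rdiv_lt_0_compat|]; lra).
  apply (Rmult_lt_reg_r (INR N + 1)); [lra|].
  replace ((b - a) / (INR N + 1) * (f b - f a) * (INR N + 1)) with ((b - a) * (f b - f a))
    by (field; lra).
  apply (Rmult_lt_reg_r (/ eps)); [apply Rinv_0_lt_compat; lra|].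
  replace (eps * (INR N + 1) * / eps) with (INR N + 1) by (field; lra).
  unfold Rdiv in HN. lra.
Qed.

End MonotoneIntegrable.

(** Myerson payments of a monotone allocation rule *)

Lemma integral_eq f a b (pr : Riemann_integrable f a b) : integral f a b = RiemannInt pr.
Proof.
  unfold integral.
  destruct (epsilon_spec (inhabits 0)
              (fun I => exists pr : Riemann_integrable f a b, RiemannInt pr = I)) as [pr' <-].
  { exists (RiemannInt pr), pr. reflexivity. }
  apply RiemannInt_P5.
Qed.

(* Allocation rules are considered as functions of the bid on [0, +oo). *)
Definition nondecreasing (f : R -> R) : Prop := forall x y, 0 <= x -> x <= y -> f x <= f y.

Section MonotoneRule.
Variable f : R -> R.
Hypothesis f_mono : nondecreasing f.

Lemma mono_rule_integrable a b : 0 <= a -> a <= b -> Riemann_integrable f a b.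
Proof.
  intros Ha Hab. destruct (Req_EM_T a b) as [<-|Hne]; [apply RiemannInt_P7|].
  apply mono_integrable; [lra|]. intros; apply f_mono; lra.
Qed.

Lemma integral_chasles a b : 0 <= a -> a <= b -> integral f 0 b = integral f 0 a + integral f a b.
Proof.
  intros Ha Hab.
  rewrite (integral_eq f 0 b (mono_rule_integrable 0 b ltac:(lra) ltac:(lra))),
    (integral_eq f 0 a (mono_rule_integrable 0 a ltac:(lra) ltac:(lra))),
    (integral_eq f a b (mono_rule_integrable a b ltac:(lra) ltac:(lra))).
  symmetry. apply RiemannInt_P26.
Qed.

Lemma integral_ge_const a b c : 0 <= a -> a <= b -> (forall x, a < x < b -> c <= f x) ->
  c * (b - a) <= integral f a b.
Proof.
  intros Ha Hab H. rewrite (integral_eq f a b (mono_rule_integrable a b Ha Hab)).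
  rewrite <- (RiemannInt_P15 (RiemannInt_P14 a b c)). apply RiemannInt_P19; auto.
Qed.

Lemma integral_le_const a b c : 0 <= a -> a <= b -> (forall x, a < x < b -> f x <= c) ->
  integral f a b <= c * (b - a).
Proof.
  intros Ha Hab H. rewrite (integral_eq f a b (mono_rule_integrable a b Ha Hab)).
  rewrite <- (RiemannInt_P15 (RiemannInt_P14 a b c)). apply RiemannInt_P19; auto.
Qed.

Lemma myerson_truthful vi r : 0 < vi -> 0 < r ->
  vi * f r - (r * f r - integral f 0 r) <= vi * f vi - (vi * f vi - integral f 0 vi).
Proof.
  intros Hvi Hr. destruct (Rle_dec r vi).
  - rewrite (integral_chasles r vi) by lra.
    pose proof (integral_ge_const r vi (f r) ltac:(lra) ltac:(lra)
                  (fun x Hx => f_mono r x ltac:(lra) ltac:(lra))). lra.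
  - rewrite (integral_chasles vi r) by lra.
    pose proof (integral_le_const vi r (f r) ltac:(lra) ltac:(lra)
                  (fun x Hx => f_mono x r ltac:(lra) ltac:(lra))). lra.
Qed.

Hypothesis f_nonneg : forall x, 0 <= x -> 0 <= f x.

Lemma integral_nonneg u : 0 <= u -> 0 <= integral f 0 u.
Proof.
  intros Hu. pose proof (integral_ge_const 0 u 0 ltac:(lra) Hu (fun x Hx => f_nonneg x ltac:(lra))).
  lra.
Qed.

(* If the allocation is constant on (p, u), the payment at u is at most p f u:
   the agent never pays more per unit than the threshold p. *)
Lemma myerson_payment_flat u p : 0 <= p -> p <= u -> (forall x, p < x < u -> f x = f u) ->
  u * f u - integral f 0 u <= p * f u.
Proof.
  intros Hp Hpu Hflat. rewrite (integral_chasles p u Hp Hpu).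
  pose proof (integral_nonneg p Hp).
  pose proof (integral_ge_const p u (f u) Hp Hpu (fun x Hx => Req_le _ _ (eq_sym (Hflat x Hx)))).
  lra.
Qed.

End MonotoneRule.

(** The sorted order of the agents *)

Ltac solve_before := unfold before in *;
  repeat match goal with
  | |- context [Rlt_dec ?x ?y] => destruct (Rlt_dec x y)
  | H : context [Rlt_dec ?x ?y] |- _ => destruct (Rlt_dec x y)
  | |- context [Req_EM_T ?x ?y] => destruct (Req_EM_T x y)
  | H : context [Req_EM_T ?x ?y] |- _ => destruct (Req_EM_T x y)
  | |- context [Nat.ltb ?x ?y] => destruct (Nat.ltb_spec x y)
  | H : context [Nat.ltb ?x ?y] |- _ => destruct (Nat.ltb_spec x y)
  end; try lra; try lia; try discriminate; auto.

Lemma before_irrefl v i : before v i i = false.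
Proof. solve_before. Qed.
Lemma before_asym v i j : before v j i = true -> before v i j = false.
Proof. intros; solve_before. Qed.
Lemma before_total v i j : i <> j -> before v j i = true \/ before v i j = true.
Proof. intros; solve_before. Qed.
Lemma before_trans v a b c : before v a b = true -> before v b c = true -> before v a c = true.
Proof. intros; solve_before. Qed.
Lemma before_le v j i : before v j i = true -> v i <= v j.
Proof. intros; solve_before. Qed.
Lemma lt_before v j i : v i < v j -> before v j i = true.
Proof. intros; solve_before. Qed.

Section Ranks.
Variables (n : nat) (v : nat -> R).

Lemma rank_lt i : (i < n)%nat -> (rank n v i < n)%nat.
Proof.
  intros Hi. unfold rank.
  replace n with (countN n (fun _ => true)) at 2 by (clear; induction n; simpl; lia).
  apply countN_strict; auto. exists i. rewrite before_irrefl. auto.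
Qed.

Lemma rank_lt_of_before j l : (j < n)%nat -> before v j l = true -> (rank n v j < rank n v l)%nat.
Proof.
  intros Hj H. apply countN_strict.
  - intros x Hx Hxj. eapply before_trans; eauto.
  - exists j. rewrite before_irrefl. auto.
Qed.

Lemma rank_lt_iff j l : (j < n)%nat -> (l < n)%nat ->
  (rank n v j < rank n v l)%nat <-> before v j l = true.
Proof.
  intros Hj Hl. split; [|apply rank_lt_of_before; auto].
  intros H. destruct (Nat.eq_dec j l) as [<-|Hne]; [lia|].
  destruct (before_total v l j (not_eq_sym Hne)) as [H1|H1]; auto.
  pose proof (rank_lt_of_before l j Hl H1). lia.
Qed.

Lemma rank_inj j l : (j < n)%nat -> (l < n)%nat -> rank n v j = rank n v l -> j = l.
Proof.
  intros Hj Hl H. destruct (Nat.eq_dec j l) as [|Hne]; auto.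
  destruct (before_total v l j (not_eq_sym Hne)) as [H1|H1].
  - pose proof (rank_lt_of_before j l Hj H1). lia.
  - pose proof (rank_lt_of_before l j Hl H1). lia.
Qed.

Lemma rank_surj r : (r < n)%nat -> exists j, (j < n)%nat /\ rank n v j = r.
Proof.
  intros Hr. refine (proj1 (@bInjective_bSurjective n (rank n v) _) _ r Hr).
  - intros x Hx. apply rank_lt; auto.
  - intros x y Hx Hy. apply rank_inj; auto.
Qed.

Lemma rank_le_value j l : (j < n)%nat -> (l < n)%nat ->
  (rank n v j <= rank n v l)%nat -> v l <= v j.
Proof.
  intros Hj Hl H. destruct (Nat.eq_dec j l) as [->|Hne]; [lra|].
  apply before_le, rank_lt_iff; auto.
  assert (rank n v j <> rank n v l) by (intro E; apply Hne, rank_inj; auto). lia.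
Qed.

Lemma count_top m : (m <= n)%nat -> countN n (fun j => Nat.ltb (rank n v j) m) = m.
Proof.
  intros Hm. apply INR_eq. rewrite countN_INR.
  rewrite (sumR_reindex n (rank n v) (fun r => if Nat.ltb r m then 1 else 0)).
  - rewrite <- countN_INR, countN_below. f_equal. lia.
  - intros x Hx. apply rank_lt; auto.
  - intros x y Hx Hy. apply rank_inj; auto.
Qed.

Lemma vsorted_rank j : (j < n)%nat -> vsorted n v (S (rank n v j)) = v j.
Proof.
  intros Hj. unfold vsorted. rewrite (sumR_single n _ j Hj), Nat.eqb_refl; auto.
  intros l Hl Hne. destruct (Nat.eqb_spec (S (rank n v l)) (S (rank n v j))); auto.
  exfalso. apply Hne, rank_inj; auto.
Qed.

Lemma vsorted_beyond m : (n < m)%nat -> vsorted n v m = 0.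
Proof.
  intros H. apply sumR_zero. intros j Hj. pose proof (rank_lt j Hj).
  destruct (Nat.eqb_spec (S (rank n v j)) m); [lia|auto].
Qed.

Lemma vsorted_at m : (1 <= m <= n)%nat ->
  exists a, (a < n)%nat /\ rank n v a = pred m /\ vsorted n v m = v a.
Proof.
  intros Hm. destruct (rank_surj (pred m)) as [a [Ha Hr]]; [lia|].
  exists a. repeat split; auto. replace m with (S (rank n v a)) by lia. apply vsorted_rank; auto.
Qed.

Lemma top_vsorted j m : (j < n)%nat -> (rank n v j < m)%nat -> (m <= n)%nat ->
  vsorted n v m <= v j.
Proof.
  intros Hj Hr Hm. destruct (vsorted_at m) as [a [Ha [Hra ->]]]; [lia|].
  apply rank_le_value; auto. lia.
Qed.

Lemma bottom_vsorted j m : (j < n)%nat -> (m <= rank n v j)%nat -> v j <= vsorted n v (S m).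
Proof.
  intros Hj Hr. pose proof (rank_lt j Hj).
  destruct (vsorted_at (S m)) as [a [Ha [Hra ->]]]; [lia|].
  apply rank_le_value; auto. simpl in Hra. lia.
Qed.

Lemma vsorted_anti m1 m2 : (1 <= m1)%nat -> (m1 <= m2 <= n)%nat -> vsorted n v m2 <= vsorted n v m1.
Proof.
  intros H1 H2. destruct (vsorted_at m1) as [a [Ha [Hra ->]]]; [lia|].
  apply top_vsorted; [auto|lia|lia].
Qed.

Variable B : nat -> R.

Lemma prefB_0 : prefB n B v 0 = 0.
Proof. apply sumR_zero. intros j _. destruct (Nat.ltb_spec (rank n v j) 0); [lia|auto]. Qed.

Lemma prefB_S a m : (a < n)%nat -> rank n v a = m -> prefB n B v (S m) = prefB n B v m + B a.
Proof.
  intros Ha Hr. unfold prefB.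
  rewrite <- (sumR_indicator n a B Ha), <- sumR_plus. apply sumR_ext. intros j Hj.
  destruct (Nat.eqb_spec j a) as [->|Hne].
  - rewrite Hr, Nat.ltb_irrefl. destruct (Nat.ltb_spec m (S m)); [lra|lia].
  - assert (rank n v j <> m) by (intro E; apply Hne, rank_inj; congruence).
    destruct (Nat.ltb_spec (rank n v j) (S m)), (Nat.ltb_spec (rank n v j) m); lra || lia.
Qed.

Lemma prefB_all : prefB n B v n = sumR n B.
Proof.
  apply sumR_ext. intros j Hj. pose proof (rank_lt j Hj).
  destruct (Nat.ltb_spec (rank n v j) n); [auto|lia].
Qed.

Lemma prefB_div k w :
  sumR n (fun j => if Nat.ltb (rank n v j) k then B j / w else 0) = prefB n B v k / w.
Proof.
  unfold prefB, Rdiv. rewrite Rmult_comm, <- sumR_scal. apply sumR_ext. intros j _.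
  destruct (Nat.ltb _ _); lra.
Qed.

Hypothesis B_nonneg : forall j, (j < n)%nat -> 0 <= B j.

Lemma prefB_nonneg m : 0 <= prefB n B v m.
Proof.
  apply sumR_nonneg. intros j Hj. specialize (B_nonneg j Hj). destruct (Nat.ltb _ _); lra.
Qed.

Lemma prefB_mono m1 m2 : (m1 <= m2)%nat -> prefB n B v m1 <= prefB n B v m2.
Proof.
  intros Hm. apply sumR_le. intros j Hj. specialize (B_nonneg j Hj).
  destruct (Nat.ltb_spec (rank n v j) m1), (Nat.ltb_spec (rank n v j) m2); lra || lia.
Qed.

Lemma prefB_ge j m : (j < n)%nat -> (rank n v j < m)%nat -> B j <= prefB n B v m.
Proof.
  intros Hj Hr. rewrite <- (sumR_indicator n j B Hj). apply sumR_le. intros l Hl.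
  specialize (B_nonneg l Hl). destruct (Nat.eqb_spec l j) as [->|].
  - apply Nat.ltb_lt in Hr. rewrite Hr. lra.
  - destruct (Nat.ltb _ _); lra.
Qed.

End Ranks.

Lemma prefB_same n B v v' m :
  (forall j, (j < n)%nat -> (rank n v' j < m)%nat <-> (rank n v j < m)%nat) ->
  prefB n B v' m = prefB n B v m.
Proof.
  intros H. apply sumR_ext. intros j Hj. specialize (H j Hj).
  destruct (Nat.ltb_spec (rank n v' j) m), (Nat.ltb_spec (rank n v j) m); auto;
    exfalso; intuition lia.
Qed.

Lemma top_same n v v' m : (m <= n)%nat ->
  (forall a o, (a < n)%nat -> (o < n)%nat -> (rank n v a < m)%nat -> (m <= rank n v o)%nat ->
     before v' a o = true) ->
  forall j, (j < n)%nat -> (rank n v' j < m)%nat <-> (rank n v j < m)%nat.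
Proof.
  intros Hm Hab j Hj. split; intros H.
  - destruct (Nat.lt_ge_cases (rank n v j) m) as [|H1]; auto. exfalso.
    assert (m <= rank n v' j)%nat; [|lia].
    rewrite <- (count_top n v m Hm). apply countN_mono.
    intros l Hl Hlt. apply Hab; auto. apply Nat.ltb_lt; auto.
  - pose proof (countN_remove n (fun l => Nat.ltb (rank n v l) m) j Hj
                  ltac:(apply Nat.ltb_lt; auto)) as E.
    rewrite count_top in E by auto.
    assert (rank n v' j <= countN n (fun l => Nat.ltb (rank n v l) m && negb (Nat.eqb l j)))%nat;
      [|lia].
    apply countN_mono. intros l Hl Hb.
    destruct (Nat.eqb_spec l j) as [->|Hne]; [rewrite before_irrefl in Hb; discriminate|].
    rewrite andb_true_r. apply Nat.ltb_lt.
    destruct (Nat.lt_ge_cases (rank n v l) m) as [|H1]; auto.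
    rewrite (before_asym v' l j (Hab j l Hj Hl H H1)) in Hb. discriminate.
Qed.

(** The number k of winners *)

(* m is admissible when the m best agents can afford to pay the m-th value. *)
Definition admissible (n : nat) (B v : nat -> R) (m : nat) : Prop := prefB n B v m <= vsorted n v m.

Lemma kaux_le n B v m : (kaux n B v m <= m)%nat.
Proof. induction m; simpl; auto. destruct (Rle_dec _ _); lia. Qed.

Lemma kaux_admissible n B v m : kaux n B v m = 0%nat \/ admissible n B v (kaux n B v m).
Proof. induction m; simpl; auto. destruct (Rle_dec _ _); auto. Qed.

Lemma kaux_max n B v m m' : (kaux n B v m < m' <= m)%nat -> ~ admissible n B v m'.
Proof.
  induction m as [|m IH]; intros H; [lia|]. simpl in H.
  destruct (Rle_dec _ _) as [|Hv]; [lia|].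
  destruct (Nat.eq_dec m' (S m)) as [->|]; [exact Hv|]. apply IH. lia.
Qed.

Section Cutoff.
Variables (n : nat) (B v : nat -> R).
Hypothesis B_nonneg : forall j, (j < n)%nat -> 0 <= B j.

(* Admissibility is downward closed: prefix budgets grow, sorted values shrink. *)
Lemma admissible_down m1 m2 : (1 <= m1)%nat -> (m1 <= m2 <= n)%nat ->
  admissible n B v m2 -> admissible n B v m1.
Proof.
  unfold admissible. intros H1 H2 Hv.
  pose proof (prefB_mono n v B B_nonneg m1 m2 ltac:(lia)).
  pose proof (vsorted_anti n v m1 m2 H1 H2). lra.
Qed.

Lemma kstar_le : (kstar n B v <= n)%nat.
Proof. apply kaux_le. Qed.

Lemma kstar_max m : (kstar n B v < m <= n)%nat -> ~ admissible n B v m.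
Proof. apply kaux_max. Qed.

Lemma kstar_admissible m : (1 <= m <= kstar n B v)%nat -> admissible n B v m.
Proof.
  intros Hm. pose proof kstar_le.
  destruct (kaux_admissible n B v n) as [H0|H0]; [unfold kstar in Hm; lia|].
  apply (admissible_down m (kstar n B v)); auto; lia.
Qed.

Lemma kstar_ge m : (1 <= m <= n)%nat -> admissible n B v m -> (m <= kstar n B v)%nat.
Proof.
  intros Hm Hv. destruct (Nat.le_gt_cases m (kstar n B v)); auto.
  exfalso. apply (kstar_max m); auto. lia.
Qed.

Lemma kstar_unique k : (k <= n)%nat -> (k = 0%nat \/ admissible n B v k) ->
  ((k < n)%nat -> ~ admissible n B v (S k)) -> kstar n B v = k.
Proof.
  intros Hk Hv Hn. pose proof kstar_le.
  assert (k <= kstar n B v)%nat.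
  { destruct Hv as [->|Hv]; [lia|]. destruct (Nat.eq_dec k 0); [lia|]. apply kstar_ge; auto. lia. }
  destruct (Nat.eq_dec k (kstar n B v)); auto. exfalso.
  apply Hn; [lia|]. apply (admissible_down (S k) (kstar n B v)); try lia.
  apply kstar_admissible. lia.
Qed.

End Cutoff.

(** The outcome of the auction *)

(* The total budget T of the k winners, the next value v_(k+1), and the
   uniform price per unit max(T, v_(k+1)) paid by the winners. *)
Definition win_budget (n : nat) (B v : nat -> R) : R := prefB n B v (kstar n B v).
Definition next_value (n : nat) (B v : nat -> R) : R := vsorted n v (S (kstar n B v)).
Definition price (n : nat) (B v : nat -> R) : R := Rmax (win_budget n B v) (next_value n B v).

Definition budget_above (n : nat) (B v : nat -> R) (p : R) : R :=
  sumR n (fun j => if Rle_dec p (v j) then B j else 0).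

Section Outcome.
Variables (n : nat) (B : nat -> R).
Hypothesis B_pos : forall j, (j < n)%nat -> 0 < B j.
Variable v : nat -> R.

Let B_nonneg : forall j, (j < n)%nat -> 0 <= B j.
Proof. intros j Hj. specialize (B_pos j Hj). lra. Qed.

Lemma win_budget_nonneg : 0 <= win_budget n B v.
Proof. apply prefB_nonneg; auto. Qed.

Lemma win_budget_pos : (1 <= kstar n B v)%nat -> 0 < win_budget n B v.
Proof.
  intros H. pose proof (kstar_le n B v).
  destruct (rank_surj n v 0) as [a [Ha Hr]]; [lia|].
  pose proof (prefB_ge n v B B_nonneg a (kstar n B v) Ha ltac:(lia)). specialize (B_pos a Ha).
  unfold win_budget. lra.
Qed.

Lemma next_value_all_win : kstar n B v = n -> next_value n B v = 0.
Proof. intros H. unfold next_value. rewrite H. apply vsorted_beyond. lia. Qed.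

Lemma next_value_inadmissible : (kstar n B v < n)%nat ->
  next_value n B v < prefB n B v (S (kstar n B v)).
Proof.
  intros H. pose proof (kstar_max n B v (S (kstar n B v)) ltac:(lia)) as Hn.
  unfold admissible in Hn. unfold next_value. lra.
Qed.

Lemma marginal_agent i : (i < n)%nat -> rank n v i = kstar n B v ->
  next_value n B v = v i /\ v i < win_budget n B v + B i.
Proof.
  intros Hi Hr. assert (E : next_value n B v = v i)
    by (unfold next_value; rewrite <- Hr; apply vsorted_rank; auto).
  split; auto. unfold win_budget. rewrite <- E, <- (prefB_S n v B i (kstar n B v) Hi Hr).
  apply next_value_inadmissible. rewrite <- Hr. apply rank_lt; auto.
Qed.

Lemma winner_value_ge_price j : (j < n)%nat -> (rank n v j < kstar n B v)%nat -> price n B v <= v j.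
Proof.
  intros Hj Hr. pose proof (kstar_le n B v).
  assert (HT : win_budget n B v <= v j).
  { pose proof (kstar_admissible n B v B_nonneg (kstar n B v) ltac:(lia)) as Hadm.
    pose proof (top_vsorted n v j (kstar n B v) Hj Hr ltac:(lia)).
    unfold admissible in Hadm. unfold win_budget. lra. }
  unfold price. apply Rmax_lub; auto.
  destruct (Nat.eq_dec (kstar n B v) n) as [E|E].
  - rewrite next_value_all_win by auto. pose proof win_budget_nonneg. lra.
  - apply top_vsorted; auto; lia.
Qed.

Lemma loser_value_le_next j : (j < n)%nat -> (kstar n B v <= rank n v j)%nat ->
  v j <= next_value n B v.
Proof. intros Hj Hr. apply bottom_vsorted; auto. Qed.

Lemma alloc_winner i : (rank n v i < kstar n B v)%nat -> alloc n B v i = B i / price n B v.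
Proof.
  intros Hr. unfold alloc, price. fold (win_budget n B v) (next_value n B v).
  apply Nat.ltb_lt in Hr. rewrite Hr. unfold Rmax.
  destruct (Rlt_dec _ _), (Rle_dec _ _); auto; lra.
Qed.

Lemma alloc_marginal i : rank n v i = kstar n B v ->
  alloc n B v i = if Rlt_dec (next_value n B v) (win_budget n B v) then 0
                  else 1 - win_budget n B v / next_value n B v.
Proof.
  intros Hr. unfold alloc. rewrite prefB_div, Hr, Nat.ltb_irrefl, Nat.eqb_refl. reflexivity.
Qed.

Lemma alloc_loser i : (kstar n B v < rank n v i)%nat -> alloc n B v i = 0.
Proof.
  intros Hr. unfold alloc.
  assert (E1 : Nat.ltb (rank n v i) (kstar n B v) = false) by (apply Nat.ltb_ge; lia).
  assert (E2 : Nat.eqb (rank n v i) (kstar n B v) = false) by (apply Nat.eqb_neq; lia).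
  rewrite E1, E2. destruct (Rlt_dec _ _); auto.
Qed.

Lemma price_pos : (1 <= kstar n B v)%nat -> 0 < price n B v.
Proof.
  intros H. pose proof (win_budget_pos H).
  pose proof (Rmax_l (win_budget n B v) (next_value n B v)). unfold price. lra.
Qed.

Lemma alloc_nonneg i : (i < n)%nat -> 0 <= alloc n B v i.
Proof.
  intros Hi. destruct (Nat.lt_total (rank n v i) (kstar n B v)) as [Hr|[Hr|Hr]].
  - rewrite alloc_winner by auto. pose proof (price_pos ltac:(lia)). specialize (B_pos i Hi).
    apply Rlt_le, Rdiv_lt_0_compat; lra.
  - rewrite alloc_marginal by auto. destruct (Rlt_dec _ _) as [|HII]; [lra|].
    destruct (Req_dec (next_value n B v) 0) as [->|Hne].
    + unfold Rdiv. rewrite Rinv_0. lra.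
    + pose proof win_budget_nonneg.
      assert (win_budget n B v / next_value n B v <= 1); [|lra].
      unfold Rdiv. rewrite <- (Rinv_r (next_value n B v)) by auto.
      apply Rmult_le_compat_r; [apply Rlt_le, Rinv_0_lt_compat|]; lra.
  - rewrite alloc_loser by auto. lra.
Qed.

Lemma prefB_le_budget_above m p : (m <= n)%nat -> (m = 0%nat \/ p <= vsorted n v m) ->
  prefB n B v m <= budget_above n B v p.
Proof.
  intros Hm Hp. apply sumR_le. intros j Hj. specialize (B_nonneg j Hj).
  destruct (Nat.ltb_spec (rank n v j) m) as [Hr|]; destruct (Rle_dec p (v j)) as [|Hn]; try lra.
  exfalso. apply Hn. destruct Hp as [->|Hp]; [lia|].
  pose proof (top_vsorted n v j m Hj Hr Hm). lra.
Qed.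

Lemma price_le_budget_above : price n B v <= budget_above n B v (price n B v).
Proof.
  pose proof (kstar_le n B v). unfold price, Rmax.
  destruct (Rle_dec (win_budget n B v) (next_value n B v)).
  - destruct (Nat.eq_dec (kstar n B v) n) as [E|E].
    + rewrite (next_value_all_win E). apply sumR_nonneg. intros j Hj.
      specialize (B_nonneg j Hj). destruct (Rle_dec _ _); lra.
    + pose proof (next_value_inadmissible ltac:(lia)).
      pose proof (prefB_le_budget_above (S (kstar n B v)) (next_value n B v) ltac:(lia)
                    ltac:(right; unfold next_value; lra)). lra.
  - apply prefB_le_budget_above; auto.
    destruct (Nat.eq_dec (kstar n B v) 0) as [|E]; [left; auto|right].
    apply (kstar_admissible n B v B_nonneg). lia.
Qed.

Lemma nonwinner_spend_le_budget i : (i < n)%nat -> 0 < v i -> (kstar n B v <= rank n v i)%nat ->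
  v i * alloc n B v i <= B i.
Proof.
  intros Hi Hvi Hr. specialize (B_pos i Hi).
  destruct (Nat.eq_dec (rank n v i) (kstar n B v)) as [E|E].
  - rewrite alloc_marginal by auto. destruct (Rlt_dec _ _); [lra|].
    destruct (marginal_agent i Hi E) as [-> Hlt].
    replace (v i * (1 - win_budget n B v / v i)) with (v i - win_budget n B v) by (field; lra).
    lra.
  - rewrite alloc_loser by lia. lra.
Qed.

End Outcome.

Section WinnerStable.
Variables (n : nat) (B : nat -> R).
Hypothesis B_pos : forall j, (j < n)%nat -> 0 < B j.
Variables (v v' : nat -> R) (i : nat).
Hypothesis i_lt_n : (i < n)%nat.
Hypothesis agree_off_i : forall j, (j < n)%nat -> j <> i -> v' j = v j.
Hypothesis i_winner : (rank n v i < kstar n B v)%nat.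
Hypothesis i_before_losers :
  forall o, (o < n)%nat -> (kstar n B v <= rank n v o)%nat -> before v' i o = true.
Hypothesis i_affords : win_budget n B v <= v' i.

Let B_nonneg : forall j, (j < n)%nat -> 0 <= B j.
Proof. intros j Hj. specialize (B_pos j Hj). lra. Qed.

Lemma stable_top m : (m = kstar n B v \/ m = S (kstar n B v)) -> (m <= n)%nat ->
  forall j, (j < n)%nat -> (rank n v' j < m)%nat <-> (rank n v j < m)%nat.
Proof.
  intros Hm Hmn. apply top_same; auto. intros a o Ha Ho Hra Hro.
  destruct (Nat.eq_dec a i) as [->|Hai]; [apply i_before_losers; auto; lia|].
  assert (o <> i) by (intros ->; lia).
  unfold before. rewrite (agree_off_i a), (agree_off_i o) by auto.
  change (before v a o = true). apply (rank_lt_iff n v a o Ha Ho). lia.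
Qed.

Lemma stable_prefB m : (m = kstar n B v \/ m = S (kstar n B v)) -> (m <= n)%nat ->
  prefB n B v' m = prefB n B v m.
Proof. intros Hm Hmn. apply prefB_same, stable_top; auto. Qed.

(* k stays admissible: the winners still value the good at least T. *)
Lemma stable_admissible : (1 <= kstar n B v)%nat -> admissible n B v' (kstar n B v).
Proof.
  intros Hk. pose proof (kstar_le n B v). unfold admissible.
  rewrite stable_prefB by auto. fold (win_budget n B v).
  destruct (vsorted_at n v' (kstar n B v)) as [a [Ha [Hra ->]]]; [lia|].
  destruct (Nat.eq_dec a i) as [->|Hai]; auto.
  assert (Hwin : (rank n v a < kstar n B v)%nat) by (apply stable_top; auto; lia).
  rewrite agree_off_i by auto.
  pose proof (winner_value_ge_price n B B_pos v a Ha Hwin). unfold price in *.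
  pose proof (Rmax_l (win_budget n B v) (next_value n B v)). lra.
Qed.

Lemma stable_vsorted_next : (kstar n B v < n)%nat ->
  vsorted n v' (S (kstar n B v)) = vsorted n v (S (kstar n B v)).
Proof.
  intros Hk. destruct (vsorted_at n v' (S (kstar n B v))) as [a [Ha [Hra ->]]]; [lia|].
  simpl in Hra.
  assert (Hra1 : (rank n v a < S (kstar n B v))%nat) by (apply stable_top; auto; lia).
  assert (Hra2 : ~ (rank n v a < kstar n B v)%nat)
    by (rewrite <- stable_top by (auto; lia); lia).
  assert (Hai : a <> i) by (intros ->; lia).
  rewrite agree_off_i by auto. replace (kstar n B v) with (rank n v a) by lia.
  symmetry. apply vsorted_rank; auto.
Qed.

Lemma stable_kstar : kstar n B v' = kstar n B v.
Proof.
  pose proof (kstar_le n B v). apply (kstar_unique n B v' B_nonneg); auto.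
  - destruct (Nat.eq_dec (kstar n B v) 0); [left|right]; auto.
    apply stable_admissible. lia.
  - intros Hk. unfold admissible.
    rewrite stable_prefB, stable_vsorted_next by auto.
    apply (kstar_max n B v (S (kstar n B v))). lia.
Qed.

Lemma stable_price : price n B v' = price n B v.
Proof.
  pose proof (kstar_le n B v). unfold price, win_budget, next_value.
  rewrite stable_kstar, stable_prefB by auto. f_equal.
  destruct (Nat.eq_dec (kstar n B v) n) as [E|E].
  - rewrite !vsorted_beyond by lia. reflexivity.
  - apply stable_vsorted_next. lia.
Qed.

Lemma winner_alloc_stable : alloc n B v' i = alloc n B v i.
Proof.
  pose proof (kstar_le n B v).
  assert (Hwin' : (rank n v' i < kstar n B v')%nat)
    by (rewrite stable_kstar; apply stable_top; auto).
  rewrite !alloc_winner by auto. rewrite stable_price. reflexivity.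
Qed.

End WinnerStable.

(** Monotonicity of the allocation in the own bid *)

Lemma upd_same b i t : upd b i t i = t.
Proof. unfold upd. rewrite Nat.eqb_refl. reflexivity. Qed.

Lemma upd_other b i t j : j <> i -> upd b i t j = b j.
Proof. intros H. unfold upd. apply Nat.eqb_neq in H. rewrite H. reflexivity. Qed.

Lemma before_lower_bid b i t1 t2 j : t1 <= t2 -> j <> i ->
  before (upd b i t2) j i = true -> before (upd b i t1) j i = true.
Proof.
  intros Ht Hj. unfold before. rewrite !upd_same, !upd_other by auto. intros; solve_before.
Qed.

Lemma before_raise_bid b i t1 t2 j : t1 <= t2 -> j <> i ->
  before (upd b i t1) i j = true -> before (upd b i t2) i j = true.
Proof.
  intros Ht Hj. unfold before. rewrite !upd_same, !upd_other by auto. intros; solve_before.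
Qed.

Lemma Rdiv_le_den a b c : 0 < a -> a <= b -> 0 <= c -> c / b <= c / a.
Proof.
  intros. unfold Rdiv. apply Rmult_le_compat_l; auto. apply Rinv_le_contravar; auto.
Qed.

Lemma marginal_share_le T t Bi p : 0 <= T <= t -> t < T + Bi -> 0 < p <= T + Bi ->
  1 - T / t <= Bi / p.
Proof.
  intros HT Ht Hp. apply Rle_trans with (Bi / (T + Bi)); [|apply Rdiv_le_den; lra].
  destruct (Req_dec t 0) as [->|Ht0].
  - replace T with 0 by lra. unfold Rdiv. rewrite Rmult_0_l, Rplus_0_l, Rinv_r; lra.
  - replace (Bi / (T + Bi)) with (1 - T / (T + Bi)) by (field; lra).
    pose proof (Rdiv_le_den t (T + Bi) T ltac:(lra) ltac:(lra) ltac:(lra)). lra.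
Qed.

Lemma marginal_share_mono T1 t1 T2 t2 : 0 <= T2 <= T1 -> T1 <= t1 -> t1 < t2 ->
  1 - T1 / t1 <= 1 - T2 / t2.
Proof.
  intros HT Ht1 Ht2. destruct (Req_dec t1 0) as [->|Ht0].
  - replace T1 with 0 by lra. replace T2 with 0 by lra. unfold Rdiv. rewrite !Rmult_0_l. lra.
  - pose proof (Rdiv_le_den t1 t2 T1 ltac:(lra) ltac:(lra) ltac:(lra)).
    assert (T2 / t2 <= T1 / t2)
      by (unfold Rdiv; apply Rmult_le_compat_r; [apply Rlt_le, Rinv_0_lt_compat|]; lra).
    lra.
Qed.

Section OwnBid.
Variables (n : nat) (B : nat -> R).
Hypothesis B_pos : forall j, (j < n)%nat -> 0 < B j.
Variables (b : nat -> R) (i : nat).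
Hypothesis i_lt_n : (i < n)%nat.

Let B_nonneg : forall j, (j < n)%nat -> 0 <= B j.
Proof. intros j Hj. specialize (B_pos j Hj). lra. Qed.

Lemma agree_upd t1 t2 j : (j < n)%nat -> j <> i -> upd b i t2 j = upd b i t1 j.
Proof. intros _ Hj. rewrite !upd_other; auto. Qed.

Lemma alloc_raise_winner t1 t2 : t1 <= t2 ->
  (rank n (upd b i t1) i < kstar n B (upd b i t1))%nat ->
  alloc n B (upd b i t2) i = alloc n B (upd b i t1) i.
Proof.
  intros Ht Hw. apply winner_alloc_stable; auto.
  - apply agree_upd.
  - intros o Ho Hro. assert (o <> i) by (intros ->; lia).
    apply (before_raise_bid b i t1 t2 o); auto.
    apply (rank_lt_iff n (upd b i t1) i o i_lt_n Ho). lia.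
  - pose proof (winner_value_ge_price n B B_pos _ i i_lt_n Hw).
    pose proof (Rmax_l (win_budget n B (upd b i t1)) (next_value n B (upd b i t1))).
    unfold price in *. rewrite upd_same in *. lra.
Qed.

Lemma prefB_ahead_raise t1 t2 : t1 <= t2 ->
  prefB n B (upd b i t2) (rank n (upd b i t2) i) <= prefB n B (upd b i t1) (rank n (upd b i t1) i).
Proof.
  intros Ht. apply sumR_le. intros j Hj. specialize (B_nonneg j Hj).
  destruct (Nat.ltb_spec (rank n (upd b i t2) j) (rank n (upd b i t2) i)) as [Hr|];
    [|destruct (Nat.ltb _ _); lra].
  assert (Hji : j <> i) by (intros ->; lia).
  apply (rank_lt_iff n _ j i Hj i_lt_n), (before_lower_bid b i t1 t2 j Ht Hji),
        (rank_lt_iff n _ j i Hj i_lt_n), Nat.ltb_lt in Hr.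
  rewrite Hr. lra.
Qed.

Lemma budget_above_raise t1 t2 p : t1 < p ->
  budget_above n B (upd b i t2) p <= prefB n B (upd b i t1) (rank n (upd b i t1) i) + B i.
Proof.
  intros Hp. unfold prefB. rewrite <- (sumR_indicator n i B i_lt_n), <- sumR_plus.
  apply sumR_le. intros j Hj. specialize (B_nonneg j Hj).
  destruct (Nat.eqb_spec j i) as [->|Hji]; [destruct (Rle_dec _ _), (Nat.ltb _ _); lra|].
  destruct (Rle_dec p (upd b i t2 j)) as [Hle|]; [|destruct (Nat.ltb _ _); lra].
  assert (Hbefore : before (upd b i t1) j i = true).
  { apply lt_before. rewrite upd_same, upd_other in * by auto. lra. }
  apply (rank_lt_iff n _ j i Hj i_lt_n), Nat.ltb_lt in Hbefore. rewrite Hbefore. lra.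
Qed.

Section MarginalRaise.
Variables t1 t2 : R.
Local Notation v1 := (upd b i t1).
Local Notation v2 := (upd b i t2).
Local Notation T1 := (win_budget n B (upd b i t1)).
Hypothesis t1_lt_t2 : t1 < t2.
Hypothesis i_marginal : rank n v1 i = kstar n B v1.
Hypothesis case_II : ~ next_value n B v1 < T1.

Lemma marginal_raise_facts : 0 <= T1 <= t1 /\ t1 < T1 + B i /\ alloc n B v1 i = 1 - T1 / t1.
Proof.
  destruct (marginal_agent n B v1 i i_lt_n i_marginal) as [EW Hlt].
  rewrite upd_same in EW, Hlt. rewrite EW in case_II.
  pose proof (win_budget_nonneg n B B_pos v1).
  repeat split; try lra.
  rewrite alloc_marginal, EW by auto. destruct (Rlt_dec _ _); [contradiction|auto].
Qed.

Lemma marginal_raise_ahead : prefB n B v2 (rank n v2 i) <= T1.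
Proof.
  pose proof (prefB_ahead_raise t1 t2 ltac:(lra)) as H. rewrite i_marginal in H. exact H.
Qed.

Lemma marginal_raise_not_loser : (rank n v2 i <= kstar n B v2)%nat.
Proof.
  destruct (Nat.eq_dec (rank n v2 i) 0) as [->|Hr0]; [lia|].
  pose proof (rank_lt n v2 i i_lt_n).
  apply kstar_ge; auto; [lia|]. unfold admissible.
  destruct (vsorted_at n v2 (rank n v2 i)) as [a [Ha [Hra ->]]]; [lia|].
  assert (Hai : a <> i) by (intros ->; lia).
  assert (Hbefore : before v1 a i = true).
  { apply (before_lower_bid b i t1 t2 a); [lra|auto|].
    apply (rank_lt_iff n v2 a i Ha i_lt_n). lia. }
  apply (rank_lt_iff n v1 a i Ha i_lt_n) in Hbefore. rewrite i_marginal in Hbefore.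
  pose proof (winner_value_ge_price n B B_pos v1 a Ha Hbefore).
  pose proof (Rmax_l T1 (next_value n B v1)).
  pose proof marginal_raise_ahead.
  unfold price in *. rewrite upd_other in * by auto. lra.
Qed.

(* After the raise, i is either marginal with a smaller T and a larger W, or a
   winner at a price at most T1 + B i: either way its share grows. *)
Lemma alloc_raise_marginal : alloc n B v1 i <= alloc n B v2 i.
Proof.
  destruct marginal_raise_facts as [HT [Hlt ->]].
  pose proof marginal_raise_ahead as Hahead.
  pose proof marginal_raise_not_loser.
  destruct (Nat.eq_dec (rank n v2 i) (kstar n B v2)) as [E|E].
  - destruct (marginal_agent n B v2 i i_lt_n E) as [EW _]. rewrite upd_same in EW.
    assert (HT2 : win_budget n B v2 <= T1) by (unfold win_budget; rewrite <- E; auto).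
    pose proof (win_budget_nonneg n B B_pos v2).
    rewrite alloc_marginal, EW by auto. destruct (Rlt_dec _ _); [lra|].
    apply marginal_share_mono; lra.
  - assert (Hwin : (rank n v2 i < kstar n B v2)%nat) by lia.
    rewrite alloc_winner by auto.
    pose proof (price_pos n B B_pos v2 ltac:(lia)).
    apply marginal_share_le; try lra. split; auto.
    destruct (Rle_dec (price n B v2) t1); [lra|].
    pose proof (price_le_budget_above n B B_pos v2).
    pose proof (budget_above_raise t1 t2 (price n B v2) ltac:(lra)) as Hdemand.
    rewrite i_marginal in Hdemand. fold (win_budget n B v1) in Hdemand. lra.
Qed.

End MarginalRaise.

Lemma alloc_mono : nondecreasing (fun t => alloc n B (upd b i t) i).
Proof.
  intros t1 t2 Ht1 Ht12. destruct (Req_dec t1 t2) as [<-|Hne]; [lra|].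
  destruct (Nat.lt_total (rank n (upd b i t1) i) (kstar n B (upd b i t1))) as [Hw|[Hm|Hl]].
  - rewrite (alloc_raise_winner t1 t2) by auto. lra.
  - destruct (Rlt_dec (next_value n B (upd b i t1)) (win_budget n B (upd b i t1))) as [HI|HII].
    + rewrite (alloc_marginal n B (upd b i t1) i Hm). destruct (Rlt_dec _ _); [|contradiction].
      apply alloc_nonneg; auto.
    + apply alloc_raise_marginal; auto. lra.
  - rewrite alloc_loser by auto. apply alloc_nonneg; auto.
Qed.

Lemma alloc_winner_flat u x : (rank n (upd b i u) i < kstar n B (upd b i u))%nat ->
  price n B (upd b i u) < x -> alloc n B (upd b i x) i = alloc n B (upd b i u) i.
Proof.
  intros Hw Hx. apply winner_alloc_stable; auto.
  - apply agree_upd.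
  - intros o Ho Hro. assert (o <> i) by (intros ->; lia).
    pose proof (loser_value_le_next n B _ o Ho Hro) as Hlose.
    pose proof (Rmax_r (win_budget n B (upd b i u)) (next_value n B (upd b i u))).
    apply lt_before. rewrite upd_same, upd_other by auto. rewrite upd_other in Hlose by auto.
    unfold price in Hx. lra.
  - pose proof (Rmax_l (win_budget n B (upd b i u)) (next_value n B (upd b i u))).
    rewrite upd_same. unfold price in Hx. lra.
Qed.

Lemma payment_le_budget u : 0 < u ->
  u * alloc n B (upd b i u) i - integral (fun t => alloc n B (upd b i t) i) 0 u <= B i.
Proof.
  intros Hu. set (F := fun t => alloc n B (upd b i t) i).
  change (alloc n B (upd b i u) i) with (F u).
  assert (F_nonneg : forall x, 0 <= x -> 0 <= F x) by (intros; apply alloc_nonneg; auto).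
  pose proof (integral_nonneg F alloc_mono F_nonneg u ltac:(lra)) as Hint.
  destruct (Nat.lt_ge_cases (rank n (upd b i u) i) (kstar n B (upd b i u))) as [Hw|Hnw].
  - (* a winner pays at most the price per unit *)
    set (p := price n B (upd b i u)).
    assert (Hp : 0 < p) by (apply price_pos; auto; lia).
    assert (Hpu : p <= u).
    { pose proof (winner_value_ge_price n B B_pos _ i i_lt_n Hw) as Hval.
      rewrite upd_same in Hval. auto. }
    assert (EF : F u = B i / p) by (apply alloc_winner; auto).
    pose proof (myerson_payment_flat F alloc_mono F_nonneg u p ltac:(lra) Hpu
                  (fun x Hx => alloc_winner_flat u x Hw (proj1 Hx))) as Hpay.
    rewrite EF in Hpay |- *. replace (p * (B i / p)) with (B i) in Hpay by (field; lra). lra.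
  - (* a non-winner pays at most what it spends *)
    pose proof (nonwinner_spend_le_budget n B B_pos (upd b i u) i i_lt_n) as Hspend.
    rewrite upd_same in Hspend. specialize (Hspend Hu Hnw). unfold F in *. lra.
Qed.

End OwnBid.

(** The liquid welfare of the auction is the uniform price *)

Section AuctionWelfare.
Variables (n : nat) (B v : nat -> R).
Hypothesis B_pos : forall j, (j < n)%nat -> 0 < B j.
Hypothesis v_pos : forall j, (j < n)%nat -> 0 < v j.

(* Any feasible allocation gives at most the winners' budgets plus the next value. *)
Lemma LW_le_two_price y : feasible n y -> LW n v B y <= 2 * price n B v.
Proof.
  intros [Hy Hsum].
  assert (HW : 0 <= next_value n B v).
  { unfold next_value. destruct (Nat.le_gt_cases (S (kstar n B v)) n).
    - destruct (vsorted_at n v (S (kstar n B v))) as [a [Ha [_ ->]]]; [lia|].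
      pose proof (v_pos a Ha). lra.
    - rewrite vsorted_beyond by lia. lra. }
  apply Rle_trans with (win_budget n B v + next_value n B v).
  2:{ pose proof (Rmax_l (win_budget n B v) (next_value n B v)).
      pose proof (Rmax_r (win_budget n B v) (next_value n B v)). unfold price. lra. }
  unfold LW, win_budget, prefB.
  rewrite <- (Rmult_1_r (next_value n B v)), <- Hsum, <- sumR_scal, <- sumR_plus.
  apply sumR_le. intros j Hj. specialize (Hy j Hj).
  pose proof (v_pos j Hj). pose proof (B_pos j Hj).
  destruct (Nat.ltb_spec (rank n v j) (kstar n B v)) as [Hr|Hr].
  - pose proof (Rmin_r (v j * y j) (B j)). nra.
  - pose proof (Rmin_l (v j * y j) (B j)). pose proof (loser_value_le_next n B v j Hj Hr). nra.
Qed.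

Hypothesis n_pos : (0 < n)%nat.

(* The liquid welfare contributed by the marginal agent. *)
Definition marginal_surplus : R :=
  if Rlt_dec (next_value n B v) (win_budget n B v) then 0 else next_value n B v - win_budget n B v.

Lemma welfare_term j : (j < n)%nat ->
  Rmin (v j * alloc n B v j) (B j) =
  (if Nat.ltb (rank n v j) (kstar n B v) then B j else 0) +
  (if Nat.eqb (rank n v j) (kstar n B v) then marginal_surplus else 0).
Proof.
  intros Hj. pose proof (B_pos j Hj).
  destruct (Nat.lt_total (rank n v j) (kstar n B v)) as [Hr|[Hr|Hr]].
  - assert (E : Nat.eqb (rank n v j) (kstar n B v) = false) by (apply Nat.eqb_neq; lia).
    apply Nat.ltb_lt in Hr as Hr'. rewrite Hr', E, alloc_winner by auto.
    pose proof (winner_value_ge_price n B B_pos v j Hj Hr).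
    pose proof (price_pos n B B_pos v ltac:(lia)).
    rewrite Rplus_0_r. apply Rmin_right.
    replace (v j * (B j / price n B v)) with (B j * (v j / price n B v)) by (field; lra).
    assert (1 <= v j / price n B v).
    { unfold Rdiv. rewrite <- (Rinv_r (price n B v)) by lra.
      apply Rmult_le_compat_r; [apply Rlt_le, Rinv_0_lt_compat|]; lra. }
    nra.
  - rewrite Hr, Nat.ltb_irrefl, Nat.eqb_refl, alloc_marginal, Rplus_0_l by auto.
    unfold marginal_surplus.
    destruct (marginal_agent n B v j Hj Hr) as [EW Hlt]. rewrite EW in *.
    destruct (Rlt_dec _ _); [rewrite Rmult_0_r; apply Rmin_left; lra|].
    pose proof (v_pos j Hj).
    replace (v j * (1 - win_budget n B v / v j)) with (v j - win_budget n B v) by (field; lra).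
    apply Rmin_left. lra.
  - assert (E1 : Nat.ltb (rank n v j) (kstar n B v) = false) by (apply Nat.ltb_ge; lia).
    assert (E2 : Nat.eqb (rank n v j) (kstar n B v) = false) by (apply Nat.eqb_neq; lia).
    rewrite E1, E2, alloc_loser, Rmult_0_r, Rplus_0_l by auto. apply Rmin_left. lra.
Qed.

(* Exactly one agent is marginal unless everybody wins, in which case the
   surplus vanishes: W = 0 < T. *)
Lemma marginal_surplus_sum :
  sumR n (fun j => if Nat.eqb (rank n v j) (kstar n B v) then marginal_surplus else 0)
  = marginal_surplus.
Proof.
  pose proof (kstar_le n B v). destruct (Nat.eq_dec (kstar n B v) n) as [E|E].
  - rewrite sumR_zero.
    + pose proof (win_budget_pos n B B_pos v ltac:(lia)). unfold marginal_surplus.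
      rewrite next_value_all_win by auto. destruct (Rlt_dec _ _); lra.
    + intros j Hj. pose proof (rank_lt n v j Hj).
      destruct (Nat.eqb_spec (rank n v j) (kstar n B v)); [lia|auto].
  - destruct (rank_surj n v (kstar n B v)) as [m [Hm Hrm]]; [lia|].
    rewrite (sumR_single n _ m Hm), Hrm, Nat.eqb_refl; auto.
    intros j Hj Hne. destruct (Nat.eqb_spec (rank n v j) (kstar n B v)); auto.
    exfalso. apply Hne, (rank_inj n v); congruence.
Qed.

(* The liquid welfare of the auction is T + (W - T)^+ = max(T, W). *)
Lemma LW_alloc_eq_price : LW n v B (alloc n B v) = price n B v.
Proof.
  unfold LW. rewrite (sumR_ext n _ _ welfare_term), sumR_plus, marginal_surplus_sum.
  fold (prefB n B v (kstar n B v)) (win_budget n B v).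
  unfold marginal_surplus, price, Rmax. destruct (Rlt_dec _ _), (Rle_dec _ _); lra.
Qed.

End AuctionWelfare.

(** The optimal liquid welfare is attained by a greedy allocation *)

Lemma Rmin_le_tangent v z Bj p : 0 <= z -> 0 < p -> p <= v -> 0 < Bj ->
  Rmin (v * z) Bj <= p * z + (Bj - p * (Bj / v)).
Proof.
  intros Hz Hp Hpv HB. set (w := Bj / v).
  assert (EB : Bj = v * w) by (unfold w; field; lra).
  assert (Hw : 0 < w) by (unfold w; apply Rdiv_lt_0_compat; lra).
  rewrite EB. unfold Rmin. destruct (Rle_dec (v * z) (v * w)).
  - assert (z <= w) by nra. nra.
  - assert (w <= z) by nra. nra.
Qed.

(* The amount of good that exhausts agent j's budget. *)
Definition saturation (B v : nat -> R) (j : nat) : R := B j / v j.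

Fixpoint greedy_count (n : nat) (C v : nat -> R) (bound : nat) : nat :=
  match bound with
  | O => O
  | S m => if Rle_dec (prefB n C v bound) 1 then bound else greedy_count n C v m
  end.

Lemma greedy_count_le n C v m : (greedy_count n C v m <= m)%nat.
Proof. induction m; simpl; auto. destruct (Rle_dec _ _); lia. Qed.

Lemma greedy_count_fits n C v m : prefB n C v (greedy_count n C v m) <= 1.
Proof. induction m; simpl; [rewrite prefB_0; lra|]. destruct (Rle_dec _ _); auto. Qed.

Lemma greedy_count_max n C v m m' : (greedy_count n C v m < m' <= m)%nat -> 1 < prefB n C v m'.
Proof.
  induction m as [|m IH]; intros H; [lia|]. simpl in H.
  destruct (Rle_dec _ _) as [|Hv]; [lia|].
  destruct (Nat.eq_dec m' (S m)) as [->|]; [lra|]. apply IH. lia.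
Qed.

Section GreedyOptimum.
Variables (n : nat) (B v : nat -> R).
Hypothesis n_pos : (0 < n)%nat.
Hypothesis B_pos : forall j, (j < n)%nat -> 0 < B j.
Hypothesis v_pos : forall j, (j < n)%nat -> 0 < v j.

Local Notation C := (saturation B v).
Local Notation g := (greedy_count n (saturation B v) v n).

Let C_pos j : (j < n)%nat -> 0 < C j.
Proof. intros Hj. apply Rdiv_lt_0_compat; auto. Qed.

Lemma opt_all_saturated : g = n -> is_opt_LW n v B (sumR n B).
Proof.
  intros Hg. pose proof (greedy_count_fits n C v n) as Hfits. rewrite Hg, prefB_all in Hfits.
  destruct (rank_surj n v 0 n_pos) as [a [Ha _]].
  set (y := fun j => C j + (if Nat.eqb j a then 1 - sumR n C else 0)).
  split.
  - exists y. split; [split|].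
    + intros j Hj. pose proof (C_pos j Hj). unfold y. destruct (Nat.eqb _ _); lra.
    + unfold y. rewrite sumR_plus, (sumR_indicator n a (fun _ => 1 - sumR n C) Ha).
      change (sumR n (fun j => C j)) with (sumR n C). lra.
    + unfold LW. apply sumR_ext. intros j Hj. apply Rmin_right.
      pose proof (v_pos j Hj). pose proof (B_pos j Hj).
      assert (0 <= (if Nat.eqb j a then 1 - sumR n C else 0)) by (destruct (Nat.eqb _ _); lra).
      unfold y. rewrite Rmult_plus_distr_l.
      replace (v j * C j) with (B j) by (unfold saturation; field; lra). nra.
  - intros z _. unfold LW. apply sumR_le. intros j Hj. apply Rmin_r.
Qed.

(* Otherwise saturate the g best agents and give the rest of the good to the
   agent a of rank g, whose value v a bounds the marginal welfare of the good. *)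
Section GreedyCut.
Variable a : nat.
Hypothesis a_lt_n : (a < n)%nat.
Hypothesis a_rank : rank n v a = g.
Local Notation Sg := (prefB n (saturation B v) v g).

Definition greedy_alloc (j : nat) : R :=
  if Nat.ltb (rank n v j) g then C j else if Nat.eqb j a then 1 - Sg else 0.

Lemma greedy_rest_le : 1 - Sg <= C a.
Proof.
  pose proof (rank_lt n v a a_lt_n).
  pose proof (greedy_count_max n C v n (S g) ltac:(lia)) as Hover.
  rewrite (prefB_S n v C a g a_lt_n a_rank) in Hover. lra.
Qed.

Lemma greedy_split f1 f2 :
  sumR n (fun j => if Nat.ltb (rank n v j) g then f1 * B j + f2 * C j else 0) =
  f1 * prefB n B v g + f2 * Sg.
Proof.
  unfold prefB. rewrite <- !sumR_scal, <- sumR_plus. apply sumR_ext.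
  intros j _. destruct (Nat.ltb _ _); lra.
Qed.

Lemma greedy_top_not_a j : (rank n v j < g)%nat -> Nat.eqb j a = false.
Proof. intros Hr. apply Nat.eqb_neq. intros ->. lia. Qed.

Lemma greedy_alloc_feasible : feasible n greedy_alloc.
Proof.
  pose proof (greedy_count_fits n C v n). split.
  - intros j Hj. pose proof (C_pos j Hj). unfold greedy_alloc.
    destruct (Nat.ltb _ _); [lra|]. destruct (Nat.eqb _ _); lra.
  - rewrite (sumR_ext n _ (fun j =>
      (if Nat.ltb (rank n v j) g then 0 * B j + 1 * C j else 0) +
      (if Nat.eqb j a then 1 - Sg else 0))).
    + rewrite sumR_plus, greedy_split, (sumR_indicator n a (fun _ => 1 - Sg) a_lt_n). lra.
    + intros j Hj. unfold greedy_alloc.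
      destruct (Nat.ltb_spec (rank n v j) g) as [Hr|]; [|lra].
      rewrite (greedy_top_not_a j Hr). lra.
Qed.

(* The g best agents are saturated and a's welfare is not capped by its budget. *)
Lemma greedy_alloc_LW : LW n v B greedy_alloc = prefB n B v g + v a * (1 - Sg).
Proof.
  unfold LW. rewrite (sumR_ext n _ (fun j =>
    (if Nat.ltb (rank n v j) g then 1 * B j + 0 * C j else 0) +
    (if Nat.eqb j a then v a * (1 - Sg) else 0))).
  - rewrite sumR_plus, greedy_split, (sumR_indicator n a (fun _ => v a * (1 - Sg)) a_lt_n). lra.
  - intros j Hj. unfold greedy_alloc. pose proof (B_pos j Hj). pose proof (v_pos j Hj).
    destruct (Nat.ltb_spec (rank n v j) g) as [Hr|Hr].
    + rewrite (greedy_top_not_a j Hr).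
      replace (v j * C j) with (B j) by (unfold saturation; field; lra).
      rewrite Rmin_left; lra.
    + destruct (Nat.eqb_spec j a) as [->|]; [|rewrite Rmult_0_r, Rmin_left; lra].
      rewrite Rmin_left; [lra|]. pose proof greedy_rest_le.
      replace (B a) with (v a * C a) by (unfold saturation; field; lra).
      apply Rmult_le_compat_l; lra.
Qed.

(* Each unit of good is worth at most v a, beyond the budgets of the g best agents. *)
Lemma greedy_cut_upper z : feasible n z -> LW n v B z <= prefB n B v g + v a * (1 - Sg).
Proof.
  intros [Hz Hsum]. unfold LW. pose proof (v_pos a a_lt_n).
  apply Rle_trans with (sumR n (fun j =>
    v a * z j + (if Nat.ltb (rank n v j) g then 1 * B j + (- v a) * C j else 0))).
  - apply sumR_le. intros j Hj. specialize (Hz j Hj). pose proof (B_pos j Hj).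
    destruct (Nat.ltb_spec (rank n v j) g) as [Hr|Hr].
    + replace (1 * B j + - v a * C j) with (B j - v a * (B j / v j)) by (unfold saturation; ring).
      apply Rmin_le_tangent; auto. apply (rank_le_value n v); auto. lia.
    + pose proof (Rmin_l (v j * z j) (B j)).
      assert (v j <= v a) by (apply (rank_le_value n v); auto; lia). nra.
  - rewrite sumR_plus, sumR_scal, Hsum, greedy_split. lra.
Qed.

End GreedyCut.

Lemma exists_opt_LW : exists W, is_opt_LW n v B W.
Proof.
  pose proof (greedy_count_le n C v n).
  destruct (Nat.eq_dec g n) as [E|E].
  - exists (sumR n B). apply opt_all_saturated; auto.
  - destruct (rank_surj n v g ltac:(lia)) as [a [Ha Hra]].
    exists (prefB n B v g + v a * (1 - prefB n C v g)). split.
    + exists (greedy_alloc a). split; [apply greedy_alloc_feasible|apply greedy_alloc_LW]; auto.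
    + apply greedy_cut_upper; auto.
Qed.

End GreedyOptimum.

Lemma upd_self b i : upd b i (b i) = b.
Proof.
  apply functional_extensionality. intros j. unfold upd.
  destruct (Nat.eqb_spec j i) as [->|]; reflexivity.
Qed.

Lemma upd_upd b i r u : upd (upd b i r) i u = upd b i u.
Proof.
  apply functional_extensionality. intros j. unfold upd. destruct (Nat.eqb j i); reflexivity.
Qed.

Lemma pay_upd n B b i t : pay n B (upd b i t) i =
  t * alloc n B (upd b i t) i - integral (fun u => alloc n B (upd b i u) i) 0 t.
Proof.
  unfold pay. rewrite upd_same.
  replace (fun u => alloc n B (upd (upd b i t) i u) i) with (fun u => alloc n B (upd b i u) i);
    [reflexivity|].
  apply functional_extensionality. intros u. rewrite upd_upd. reflexivity.
Qed.

Theorem mainTheorem8 (n : nat) (B : nat -> R) :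
  (0 < n)%nat ->
  (forall j, (j < n)%nat -> 0 < B j) ->
  (* incentive compatibility *)
  (forall (b : nat -> R) (i : nat) (vi r : R),
      (forall j, (j < n)%nat -> 0 < b j) -> (i < n)%nat -> 0 < vi -> 0 < r ->
      ole (utility n B (upd b i r) i vi) (utility n B (upd b i vi) i vi)) /\
  (* budget feasibility of payments *)
  (forall (b : nat -> R) (i : nat),
      (forall j, (j < n)%nat -> 0 < b j) -> (i < n)%nat ->
      pay n B b i <= B i) /\
  (* 1/2-approximation of optimal liquid welfare *)
  (forall (v : nat -> R),
      (forall j, (j < n)%nat -> 0 < v j) ->
      exists W, is_opt_LW n v B W /\ LW n v B (alloc n B v) >= W / 2).
Proof.
  intros Hn HB. split; [|split].
  - intros b i vi r Hb Hi Hvi Hr. unfold utility.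
    assert (Hpay : forall t, 0 < t -> pay n B (upd b i t) i <= B i)
      by (intros t Ht; rewrite pay_upd; apply payment_le_budget; auto).
    destruct (Rle_dec (pay n B (upd b i r) i) (B i)); [|exact I].
    destruct (Rle_dec (pay n B (upd b i vi) i) (B i)) as [|Hc]; [|exfalso; apply Hc, Hpay; auto].
    simpl. rewrite !pay_upd.
    apply (myerson_truthful (fun u => alloc n B (upd b i u) i)); auto. apply alloc_mono; auto.
  - intros b i Hb Hi. rewrite <- (upd_self b i) at 1. rewrite pay_upd.
    apply payment_le_budget; auto.
  - intros v Hv. destruct (exists_opt_LW n B v Hn HB Hv) as [W HW].
    exists W. split; auto.
    destruct HW as [[y [Hy <-]] _].
    pose proof (LW_le_two_price n B v HB Hv y Hy).
    rewrite LW_alloc_eq_price by auto. lra.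
Qed.
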